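(* Let $X$ be a finite set, $R>1$, $p\in(0,1]$, and let $\mathbf{A}\sim\pi$ be an $R$-spread random subset of $X$. Then there exists a coupling $\mathbb{P}_p$ of $\mathbf{A}\sim\pi$, $\mathbf{A}'\sim\pi$ and $\mathbf{V}\sim\mathbb{Q}_p$ (random subsets of $X$) under which $\mathbf{A}$ and $\mathbf{V}$ are independent and \[ \mathbb{E}_{\mathbb{P}_p}\bigg[\frac{|\mathbf{A}'\setminus\mathbf{V}|}{|\mathbf{A}|}\,\mathbf{1}\{\mathbf{A}\neq\emptyset\}\bigg]\le \frac{7}{(pR)^{1/3}}. \] Moreover, the marginal law of $\mathbf{A}'$ is the same as that of $\mathbf{A}$, and therefore $\mathbf{A}'$ is also $R$-spread.
   Context: For $R>1$, a random subset $\mathbf{A}\sim\pi$ of $X$ is called $R$-spread if for every fixed $S\subseteq X$, $\pi(S\subseteq \mathbf{A})\le R^{-|S|}$. For $p\in[0,1]$, $\mathbb{Q}_p$ denotes the law of the $p$-biased random subset of $X$, which includes each element of $X$ independently with probability $p$. The expression $\frac{|\mathbf{A}'\setminus\mathbf{V}|}{|\mathbf{A}|}\mathbf{1}\{\mathbf{A}\ne\emptyset\}$ is interpreted as $0$ when $\mathbf{A}=\emptyset$. *)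

From HB Require Import structures.
From mathcomp Require Import all_boot all_order all_algebra.
From mathcomp Require Import all_classical all_reals all_analysis.
Set Implicit Arguments. Unset Strict Implicit. Unset Printing Implicit Defensive.
Import Order.TTheory GRing.Theory Num.Theory.
Local Open Scope ring_scope.

Definition is_distr (R : realType) (T : finType) (mu : {ffun T -> R}) : Prop :=
  (forall t, 0 <= mu t) /\ \sum_t mu t = 1.

Definition spread (R : realType) (X : finType) (Rs : R)
    (pi : {ffun {set X} -> R}) : Prop :=
  forall S : {set X}, \sum_(A : {set X} | S \subset A) pi A <= Rs ^- #|S|.

Definition Qp (R : realType) (X : finType) (p : R) : {ffun {set X} -> R} :=
  [ffun V : {set X} => p ^+ #|V| * (1 - p) ^+ #|~: V|].

(* Triples (A, A', V) of subsets of X. *)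
Definition triple (X : finType) := ({set X} * {set X} * {set X})%type.

Definition margA (R : realType) (X : finType) (P : {ffun triple X -> R})
  : {ffun {set X} -> R} := [ffun a => \sum_(t : triple X | t.1.1 == a) P t].
Definition margA' (R : realType) (X : finType) (P : {ffun triple X -> R})
  : {ffun {set X} -> R} := [ffun a => \sum_(t : triple X | t.1.2 == a) P t].
Definition margV (R : realType) (X : finType) (P : {ffun triple X -> R})
  : {ffun {set X} -> R} := [ffun v => \sum_(t : triple X | t.2 == v) P t].

Definition jointAV (R : realType) (X : finType) (P : {ffun triple X -> R})
  (a v : {set X}) : R := \sum_(t : triple X | (t.1.1 == a) && (t.2 == v)) P t.

Definition loss_ratio (R : realType) (X : finType) (t : triple X) : R :=
  if t.1.1 == (finset.set0 : {set X}) then 0 else (#|t.1.2 :\: t.2|)%:R / (#|t.1.1|)%:R.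

Definition expect (R : realType) (X : finType) (P : {ffun triple X -> R})
  (f : triple X -> R) : R := \sum_t P t * f t.

(** Draw [(A, V)] from [pi ⊗ Q_p] and, given [Y = A ∪ V], draw [A'] among the
    subsets [b ⊆ Y] with probability proportional to the weight [pi(b) p^-|b|].
    The law of [Y] is [Q_p(y)] times the total weight below [y], so [A' = b] has
    probability [pi(b) p^-|b| Σ_{y ⊇ b} Q_p(y) = pi(b)].  Since [A' ⊆ A ∪ V],
    [|A' \ V| <= |A ∩ A'|], so the loss is at most [θ] plus the probability that
    [|A ∩ A'| > θ|A|].  For that, either [Y] has total weight [< δ] (probability
    at most [δ]), or [A'] is drawn from the heavy sets [b], whose expected weight
    is by spreadness at most [Σ_{S ⊆ A, |S| > θ|A|} (pR)^-|S| <= 8 / (θ pR)],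
    at a cost of [δ^-1] times that.  With [c = (pR)^(1/3)] and [θ = δ = 2 / c]
    the total is [6 / c]; for [c <= 7] the trivial bound [1] suffices. *)

From HB Require Import structures.
From mathcomp Require Import all_boot all_order all_algebra.
From mathcomp Require Import all_classical all_reals all_analysis.
From mathcomp Require Import ring lra zify.
(* Give the finite-set lemmas precedence over their classical_sets homonyms. *)
From mathcomp Require Import fintype finset.
Import Order.TTheory GRing.Theory Num.Theory.
Local Open Scope ring_scope.
Set Implicit Arguments. Unset Strict Implicit. Unset Printing Implicit Defensive.

Lemma sum_subsets_card (R : pzSemiRingType) (T : finType) (a : {set T})
    (f : nat -> R) :
  \sum_(S : {set T} | S \subset a) f #|S| = \sum_(j < #|a|.+1) 'C(#|a|, j)%:R * f j.
Proof.
rewrite (partition_big (fun S : {set T} => inord #|S| : 'I_#|a|.+1) xpredT) //=.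
apply: eq_bigr => j _.
transitivity (\sum_(S in [set S : {set T} | S \subset a & #|S| == j]) f j).
  apply: eq_big => S; last first.
    by move=> /andP[Sa /eqP <-]; rewrite inordK // ltnS subset_leq_card.
  rewrite inE; case Sa: (S \subset a) => //=.
  by rewrite -val_eqE /= inordK // ltnS subset_leq_card.
by rewrite sumr_const cards_draws mulr_natl.
Qed.

Lemma sum_subsets_binomial (R : comPzSemiRingType) (T : finType) (a : {set T})
    (x y : R) :
  \sum_(S : {set T} | S \subset a) x ^+ #|S| * y ^+ #|a :\: S| = (x + y) ^+ #|a|.
Proof.
under eq_bigr => S Sa do rewrite (cardsDS Sa).
rewrite (sum_subsets_card a (fun j => x ^+ j * y ^+ (#|a| - j))) addrC exprDn.
by apply: eq_bigr => j _; rewrite mulr_natl mulrC.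
Qed.

Lemma cardsU_setD (T : finType) (a b : {set T}) : #|a :|: b| = (#|a| + #|b :\: a|)%N.
Proof. by rewrite -(cardsID a (a :|: b)) setUK setDUl setDv set0U. Qed.

Lemma card_setD_le_setI (T : finType) (a b v : {set T}) :
  b \subset a :|: v -> (#|b :\: v| <= #|a :&: b|)%N.
Proof.
move=> /subsetP b_sub; apply/subset_leq_card/subsetP => x; rewrite !inE => /andP[xv xb].
by have := b_sub x xb; rewrite inE (negbTE xv) orbF => ->.
Qed.

Section PairSums.
Variables (R : nmodType) (I J : finType).

Lemma sum_pair (F : I * J -> R) : \sum_q F q = \sum_i \sum_j F (i, j).
Proof. by rewrite pair_bigA; apply: eq_bigr => -[]. Qed.

Lemma sum_pair_cond (P : pred I) (Q : pred J) (F : I * J -> R) :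
  \sum_(q | P q.1 && Q q.2) F q = \sum_(i | P i) \sum_(j | Q j) F (i, j).
Proof. by rewrite pair_big_dep; apply: eq_bigr => -[]. Qed.

Lemma sum_pair_fst_cond (P : pred I) (F : I * J -> R) :
  \sum_(q | P q.1) F q = \sum_(i | P i) \sum_j F (i, j).
Proof. by rewrite pair_big_dep; apply: eq_big => [[i j]|[i j] _]; rewrite ?andbT. Qed.

Lemma sum_pair_snd_cond (Q : pred J) (F : I * J -> R) :
  \sum_(q | Q q.2) F q = \sum_i \sum_(j | Q j) F (i, j).
Proof. by rewrite pair_big_dep; apply: eq_big => [[i j]|[i j] _]. Qed.

End PairSums.

Lemma sum_geometric_le (R : realFieldType) (r : R) n : 0 <= r <= 2^-1 ->
  \sum_(i < n) r ^+ i.+1 <= 2 * r.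
Proof.
case/andP=> r0 r_le; suff : \sum_(i < n) r ^+ i.+1 <= 2 * r - 2 * r ^+ n.+1.
  by move/le_trans; apply; rewrite lerBlDr lerDl mulr_ge0 ?exprn_ge0.
elim: n => [|n IH]; first by rewrite big_ord0 expr1 subrr.
have : 2 * r ^+ n.+2 <= r ^+ n.+1.
  by rewrite exprS mulrA ler_piMl ?exprn_ge0 // -ler_pdivlMl // mulr1.
by rewrite big_ord_recr /=; lra.
Qed.

Lemma ffact_le_expn n m : (n ^_ m <= n ^ m)%N.
Proof.
elim: m n => [|m IH] n //; rewrite ffactnS expnS leq_mul // (leq_trans (IH _)) //.
by case: m {IH} => // m; rewrite leq_exp2r ?leq_pred.
Qed.

Lemma expR1_le4 (R : realType) : expR (1 : R) <= 4.
Proof.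
have e_half_inv : 2^-1 <= expR (- 2^-1 : R) by have := expR_ge1Dx (- 2^-1 : R); lra.
have e_half : expR (2^-1 : R) * expR (- 2^-1) = 1 by rewrite -expRD subrr expR0.
have e_half_gt0 : 0 < expR (2^-1 : R) := expR_gt0 _.
have -> : (1 : R) = 2^-1 + 2^-1 by field.
by rewrite expRD; nra.
Qed.

Lemma expn_self_le_fact (R : realType) j : (j%:R : R) ^+ j <= 4 ^+ j * j`!%:R.
Proof.
case: j => [|n]; first by rewrite !expr0 fact0 mul1r.
have := @expR_ge1Dxn R n.+1%:R n (ler0n _ _).
rewrite -[X in expR X]mulr1 expRM_natl => e_pow.
rewrite -ler_pdivrMr ?ltr0n ?fact_gt0 //.
apply: le_trans (le_trans _ e_pow) _; first by rewrite lerDr.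
by apply: lerXn2r; rewrite ?nnegrE ?expR_ge0 ?expR1_le4.
Qed.

Lemma binomial_threshold_le (R : realType) (k j : nat) (th : R) :
  0 < th -> th * k%:R < j%:R -> 'C(k, j)%:R * th ^+ j <= 4 ^+ j.
Proof.
move=> th0 th_lt; have fact0 : (0 : R) < j`!%:R by rewrite ltr0n fact_gt0.
rewrite -(ler_pM2r fact0) mulrAC.
have binom_fact : 'C(k, j)%:R * j`!%:R <= (k%:R : R) ^+ j.
  by rewrite -natrM -natrX ler_nat bin_ffact ffact_le_expn.
apply: le_trans (expn_self_le_fact R j).
apply: le_trans (ler_wpM2r (exprn_ge0 _ (ltW th0)) binom_fact) _.
by rewrite -exprMn mulrC; apply: lerXn2r; rewrite ?nnegrE ?mulr_ge0 ?ler0n ?ltW.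
Qed.

Lemma binomial_tail_le (R : realType) (th la : R) k :
  0 < th -> 0 < la -> 4 / (th * la) <= 2^-1 ->
  \sum_(j < k.+1 | th * k%:R < j%:R) 'C(k, j)%:R / la ^+ j <= 2 * (4 / (th * la)).
Proof.
move=> th0 la0; set r := 4 / _ => r_le.
have r0 : 0 <= r by rewrite divr_ge0 // ltW // mulr_gt0.
rewrite big_mkcond big_ord_recl /= ltNge mulr_ge0 ?ler0n ?(ltW th0) // add0r.
apply: le_trans (sum_geometric_le k _); last by rewrite r0.
apply: ler_sum => i _; case: ifP => [th_lt|_]; last exact: exprn_ge0.
rewrite expr_div_n exprMn invfM mulrA ler_wpM2r ?invr_ge0 ?exprn_ge0 ?(ltW la0) //.
by rewrite ler_pdivlMr ?exprn_gt0 // binomial_threshold_le.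
Qed.

Section BiasedSubset.
Variables (R : realType) (X : finType) (p : R).

Lemma Qp_ge0 (v : {set X}) : 0 <= p <= 1 -> 0 <= Qp X p v.
Proof. by case/andP=> p0 p1; rewrite ffunE mulr_ge0 ?exprn_ge0 ?subr_ge0. Qed.

Lemma sum_Qp : \sum_(v : {set X}) Qp X p v = 1.
Proof.
transitivity (\sum_(v : {set X} | v \subset [set: X]) p ^+ #|v| * (1 - p) ^+ #|[set: X] :\: v|).
  by apply: eq_big => [v|v _]; rewrite ?subsetT // ffunE setTD.
by rewrite sum_subsets_binomial addrC subrK expr1n.
Qed.

Hypothesis p_gt0 : 0 < p.

Let expp_neq0 n : p ^+ n != 0. Proof. by rewrite expf_neq0 // gt_eqF. Qed.

Lemma Qp_setD_setU (a y u : {set X}) : a \subset y -> u \subset a ->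
  Qp X p ((y :\: a) :|: u) = Qp X p y / p ^+ #|a| * (p ^+ #|u| * (1 - p) ^+ #|a :\: u|).
Proof.
move=> ay ua; set y' := (y :\: a) :|: u.
have card_y' : #|y'| = (#|y :\: a| + #|u|)%N.
  rewrite cardsU (_ : _ :&: u = set0) ?cards0 ?subn0 //.
  by apply/eqP; rewrite setI_eq0 disjoint_sym disjoints_subset setCD (subset_trans ua) ?subsetUr.
have := cardsC y'; have := cardsC y; have := cardsDS ay; have := cardsDS ua.
have := subset_leq_card ay; have := subset_leq_card ua.
rewrite !ffunE => *; have -> : #|~: y'| = (#|~: y| + #|a :\: u|)%N by lia.
have -> : #|y| = (#|y :\: a| + #|a|)%N by lia.
by rewrite card_y' !exprD; field.
Qed.

Lemma sum_Qp_setU_eq (a y : {set X}) :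
  \sum_(v | a :|: v == y) Qp X p v = if a \subset y then Qp X p y / p ^+ #|a| else 0.
Proof.
have [ay|nay] := boolP (a \subset y); last first.
  by rewrite big_pred0 // => v; apply: contraNF nay => /eqP <-; rewrite subsetUl.
rewrite (reindex_onto (fun u => (y :\: a) :|: u) (fun v => v :&: a)) /=; last first.
  by move=> v /eqP <-; apply/setP => x; rewrite !inE; case: (x \in a); case: (x \in v).
rewrite (eq_bigl (fun u : {set X} => u \subset a)) => [|u]; last first.
  apply/andP/idP => [[_ /eqP <-]|ua]; first exact: subsetIr.
  by split; apply/eqP/setP => x; rewrite !inE;
    have /implyP := subsetP ua x; have /implyP := subsetP ay x;
    case: (x \in a); case: (x \in y); case: (x \in u).
under eq_bigr => u ua do rewrite Qp_setD_setU //.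
by rewrite -mulr_sumr sum_subsets_binomial addrC subrK expr1n mulr1.
Qed.

Lemma sum_Qp_setU (a : {set X}) (F : {set X} -> R) :
  \sum_(v : {set X}) Qp X p v * F (a :|: v) =
  \sum_(y : {set X} | a \subset y) Qp X p y / p ^+ #|a| * F y.
Proof.
rewrite (partition_big (fun v => a :|: v) xpredT) //= [RHS]big_mkcond /=.
apply: eq_bigr => y _; rewrite (eq_bigr (fun v => Qp X p v * F y)) => [|v /eqP <- //].
by rewrite -mulr_suml sum_Qp_setU_eq; case: ifP; rewrite ?mul0r.
Qed.

Lemma sum_Qp_supset (T : {set X}) : \sum_(y : {set X} | T \subset y) Qp X p y = p ^+ #|T|.
Proof.
have := sum_Qp_setU T (fun _ => 1).
under eq_bigr do rewrite mulr1; under [in RHS]eq_bigr do rewrite mulr1.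
by rewrite sum_Qp -mulr_suml => /esym/divr1_eq.
Qed.

Lemma sum_Qp_subset_setU (a b : {set X}) :
  \sum_(v : {set X} | b \subset a :|: v) Qp X p v = p ^+ #|b :\: a|.
Proof.
transitivity (\sum_(v : {set X}) Qp X p v * (b \subset a :|: v)%:R).
  by rewrite big_mkcond; apply: eq_bigr => v _; case: ifP; rewrite ?mulr1 ?mulr0.
rewrite (sum_Qp_setU a (fun y => (b \subset y)%:R)).
transitivity (\sum_(y : {set X} | a :|: b \subset y) Qp X p y / p ^+ #|a|).
  rewrite big_mkcond [RHS]big_mkcond; apply: eq_bigr => y _.
  by rewrite subUset; case: (a \subset y); case: (b \subset y); rewrite ?mulr1 ?mulr0.
by rewrite -mulr_suml sum_Qp_supset cardsU_setD exprD mulrAC divff ?mul1r.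
Qed.

End BiasedSubset.

Section LossRatio.
Variables (R : realType) (X : finType).
Implicit Types a b v : {set X}.

Lemma loss_ratio_le1 a b v : b \subset a :|: v -> loss_ratio R ((a, b), v) <= 1.
Proof.
move=> b_sub; rewrite /loss_ratio /=; case: eqP => // /eqP a_neq0.
rewrite ler_pdivrMr ?ltr0n ?card_gt0 // mul1r ler_nat.
by rewrite (leq_trans (card_setD_le_setI b_sub)) // subset_leq_card ?subsetIl.
Qed.

Lemma loss_ratio_le_threshold (th : R) a b v : 0 <= th -> b \subset a :|: v ->
  loss_ratio R ((a, b), v) <= th + if th * #|a|%:R < #|a :&: b|%:R then 1 else 0.
Proof.
move=> th0 b_sub; have [large|small] := ltrP (th * #|a|%:R)%R (#|a :&: b|%:R).
  by rewrite -[leLHS]add0r lerD // loss_ratio_le1.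
rewrite addr0 /loss_ratio /=; case: eqP => // /eqP a_neq0.
rewrite ler_pdivrMr ?ltr0n ?card_gt0 // (le_trans _ small) // ler_nat.
exact: card_setD_le_setI.
Qed.

End LossRatio.

Section Coupling.
Variables (R : realType) (X : finType) (pi : {ffun {set X} -> R}) (p : R).
Hypotheses (pi_distr : is_distr pi) (p_gt0 : 0 < p) (p_le1 : p <= 1).
Implicit Types a b v y : {set X}.

Let pi_ge0 a : 0 <= pi a. Proof. exact: pi_distr.1. Qed.
Let Qp_ge0 v : 0 <= Qp X p v. Proof. by apply: Qp_ge0; rewrite (ltW p_gt0) p_le1. Qed.
Let expp_neq0 n : p ^+ n != 0. Proof. by rewrite expf_neq0 // gt_eqF. Qed.

Definition weight b : R := pi b / p ^+ #|b|.

Definition total_weight y : R := \sum_(b : {set X} | b \subset y) weight b.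

(* The junk value [x / 0 = 0] is harmless: [total_weight (a :|: v) = 0] forces [pi a = 0]. *)
Definition resample y b : R := if b \subset y then weight b / total_weight y else 0.

Definition coupling : {ffun triple X -> R} :=
  [ffun t => pi t.1.1 * Qp X p t.2 * resample (t.1.1 :|: t.2) t.1.2].

Definition heavy_weight (th : R) a y : R :=
  \sum_(b : {set X} | (b \subset y) && (th * #|a|%:R < #|a :&: b|%:R)) weight b.

Definition heavy_overlap (th : R) a : R :=
  \sum_(b : {set X} | th * #|a|%:R < #|a :&: b|%:R) pi b / p ^+ #|a :&: b|.

Lemma weight_ge0 b : 0 <= weight b.
Proof. by rewrite divr_ge0 ?pi_ge0 ?exprn_ge0 ?(ltW p_gt0). Qed.

Lemma weight_le_total b y : b \subset y -> weight b <= total_weight y.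
Proof.
move=> sub_by; rewrite /total_weight (bigD1 b) //= lerDl.
by apply: sumr_ge0 => c _; apply: weight_ge0.
Qed.

Lemma total_weight_ge0 y : 0 <= total_weight y.
Proof. by apply: sumr_ge0 => b _; apply: weight_ge0. Qed.

Lemma resample_ge0 y b : 0 <= resample y b.
Proof.
by rewrite /resample; case: ifP => // _; rewrite divr_ge0 ?weight_ge0 ?total_weight_ge0.
Qed.

Lemma sum_resample y : \sum_b resample y b = (total_weight y != 0)%:R.
Proof.
rewrite /resample -big_mkcond -mulr_suml -/(total_weight y).
by have [->|nz] := eqVneq (total_weight y) 0; rewrite ?mul0r ?divff.
Qed.

Lemma sum_resample_le1 y : \sum_b resample y b <= 1.
Proof. by rewrite sum_resample; case: (_ != 0). Qed.

Lemma resample_mul_total y b :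
  resample y b * total_weight y = if b \subset y then weight b else 0.
Proof.
rewrite /resample; case: ifP => sub_by; last by rewrite mul0r.
have [tw0|nz] := eqVneq (total_weight y) 0; last by rewrite divfK.
apply/esym/le_anti; rewrite tw0 mulr0 weight_ge0 andbT -tw0.
exact: weight_le_total.
Qed.

Lemma sum_coupling_A' a v : \sum_a' coupling ((a, a'), v) = pi a * Qp X p v.
Proof.
under eq_bigr do rewrite ffunE /=.
rewrite -mulr_sumr sum_resample; have [->|pia0] := eqVneq (pi a) 0; first by rewrite !mul0r.
suff -> : total_weight (a :|: v) != 0 by rewrite mulr1.
rewrite gt_eqF // (lt_le_trans _ (weight_le_total (subsetUl a v))) //.
by rewrite divr_gt0 ?exprn_gt0 // lt_def pia0 pi_ge0.
Qed.

Lemma sum_pi_Qp (c : R) : \sum_a \sum_v pi a * Qp X p v * c = c.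
Proof.
under eq_bigr do rewrite -mulr_suml -mulr_sumr sum_Qp mulr1.
by rewrite -mulr_suml pi_distr.2 mul1r.
Qed.

Lemma sum_pi_Qp_setU (G : {set X} -> R) :
  \sum_a \sum_v pi a * Qp X p v * G (a :|: v) = \sum_y Qp X p y * total_weight y * G y.
Proof.
transitivity (\sum_a pi a * \sum_v Qp X p v * G (a :|: v)).
  by apply: eq_bigr => a _; rewrite mulr_sumr; apply: eq_bigr => v _; rewrite mulrA.
under eq_bigr => a _ do rewrite sum_Qp_setU // mulr_sumr.
rewrite (exchange_big_dep xpredT) //=; apply: eq_bigr => y _.
rewrite /total_weight mulr_sumr mulr_suml; apply: eq_big => [b //|b _].
by rewrite /weight; ring.
Qed.

Lemma is_distr_coupling : is_distr coupling.
Proof.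
split=> [t|]; first by rewrite ffunE !mulr_ge0 ?pi_ge0 ?resample_ge0.
rewrite sum_pair sum_pair -pi_distr.2; apply: eq_bigr => a _.
rewrite exchange_big; under eq_bigr do rewrite sum_coupling_A'.
by rewrite -mulr_sumr sum_Qp mulr1.
Qed.

Lemma margA_coupling : margA coupling = pi.
Proof.
apply/ffunP => a; rewrite ffunE (sum_pair_fst_cond (fun q => q.1 == a)).
rewrite (sum_pair_fst_cond (pred1 a)) big_pred1_eq exchange_big.
by under eq_bigr do rewrite sum_coupling_A'; rewrite -mulr_sumr sum_Qp mulr1.
Qed.

Lemma margA'_coupling : margA' coupling = pi.
Proof.
apply/ffunP => b; rewrite ffunE (sum_pair_fst_cond (fun q => q.2 == b)).
rewrite (sum_pair_snd_cond (pred1 b)); under eq_bigr do rewrite big_pred1_eq.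
under eq_bigr do under eq_bigr do rewrite ffunE /=.
rewrite (sum_pi_Qp_setU (resample^~ b)).
transitivity (\sum_(y : {set X} | b \subset y) Qp X p y * weight b).
  rewrite [RHS]big_mkcond; apply: eq_bigr => y _.
  by rewrite -mulrA [_ * resample _ _]mulrC resample_mul_total; case: ifP; rewrite ?mulr0.
by rewrite -mulr_suml sum_Qp_supset // /weight mulrC divfK.
Qed.

Lemma margV_coupling : margV coupling = Qp X p.
Proof.
apply/ffunP => v; rewrite ffunE (sum_pair_snd_cond (pred1 v)).
under eq_bigr do rewrite big_pred1_eq.
rewrite sum_pair; under eq_bigr do rewrite sum_coupling_A'.
by rewrite -mulr_suml pi_distr.2 mul1r.
Qed.

Lemma jointAV_coupling a v : jointAV coupling a v = pi a * Qp X p v.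
Proof.
rewrite /jointAV (sum_pair_cond (fun q : {set X} * {set X} => q.1 == a) (pred1 v)).
under eq_bigr do rewrite big_pred1_eq.
by rewrite (sum_pair_fst_cond (pred1 a)) big_pred1_eq sum_coupling_A'.
Qed.

Lemma expect_coupling_le (B : {set X} -> {set X} -> R) :
  (forall a v, \sum_b resample (a :|: v) b * loss_ratio R ((a, b), v) <= B a v) ->
  expect coupling (@loss_ratio R X) <= \sum_a \sum_v pi a * Qp X p v * B a v.
Proof.
move=> cond_le; rewrite /expect sum_pair sum_pair; apply: ler_sum => a _.
rewrite exchange_big; apply: ler_sum => v _.
under eq_bigr do rewrite ffunE /= -mulrA.
by rewrite -mulr_sumr ler_wpM2l ?mulr_ge0.
Qed.

Lemma sum_resample_loss_le1 a v :
  \sum_b resample (a :|: v) b * loss_ratio R ((a, b), v) <= 1.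
Proof.
apply: le_trans (sum_resample_le1 (a :|: v)); apply: ler_sum => b _.
have [b_sub|b_nsub] := boolP (b \subset a :|: v).
  by rewrite ler_piMr ?resample_ge0 ?loss_ratio_le1.
by rewrite /resample (negbTE b_nsub) mul0r.
Qed.

Lemma sum_resample_loss_le (th de : R) a v : 0 <= th -> 0 < de ->
  \sum_b resample (a :|: v) b * loss_ratio R ((a, b), v) <=
  th + (if total_weight (a :|: v) < de then 1 else 0) + de^-1 * heavy_weight th a (a :|: v).
Proof.
move=> th0 de0; set y := a :|: v.
pose heavy b := if th * #|a|%:R < #|a :&: b|%:R then 1 else 0 : R.
apply: (@le_trans _ _ (\sum_b (th * resample y b + resample y b * heavy b))).
  apply: ler_sum => b _; have [b_sub|b_nsub] := boolP (b \subset y).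
    by rewrite [th * _]mulrC -mulrDr ler_wpM2l ?resample_ge0 ?loss_ratio_le_threshold.
  by rewrite /resample (negbTE b_nsub) !(mul0r, mulr0) addr0.
rewrite big_split /= -mulr_sumr -addrA lerD ?ler_piMr ?sum_resample_le1 //.
have [light|not_light] := ltrP (total_weight y) de.
  apply: (@le_trans _ _ 1).
    apply: le_trans (sum_resample_le1 y).
    by apply: ler_sum => b _; rewrite ler_piMr ?resample_ge0 // /heavy; case: ifP.
  by rewrite lerDl mulr_ge0 ?invr_ge0 ?(ltW de0) // sumr_ge0 // => b _; apply: weight_ge0.
rewrite add0r /heavy_weight [in X in _ <= X]big_mkcond mulr_sumr; apply: ler_sum => b _.
rewrite /resample /heavy; case: ifP => _ /=; last by rewrite mul0r mulr0.
case: ifP => _; last by rewrite !mulr0.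
by rewrite mulr1 mulrC ler_wpM2r ?weight_ge0 // lef_pV2 ?posrE // (lt_le_trans de0 not_light).
Qed.

Lemma sum_Qp_heavy_weight (th : R) a :
  \sum_v Qp X p v * heavy_weight th a (a :|: v) = heavy_overlap th a.
Proof.
under eq_bigr do rewrite mulr_sumr.
rewrite (exchange_big_dep (fun b => th * #|a|%:R < #|a :&: b|%:R)) => [|v b _ /andP[] //].
apply: eq_bigr => b heavy_b; rewrite (eq_bigl (fun v => b \subset a :|: v)) => [|v].
  rewrite -mulr_suml sum_Qp_subset_setU // /weight -(cardsID a b) setIC exprD.
  by field; rewrite !expp_neq0.
by rewrite heavy_b andbT.
Qed.

Lemma expect_coupling_loss_le1 : expect coupling (@loss_ratio R X) <= 1.
Proof.
apply: le_trans (expect_coupling_le (B := fun _ _ => 1) sum_resample_loss_le1) _.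
by rewrite sum_pi_Qp.
Qed.

Lemma expect_coupling_loss_le (th de M : R) : 0 <= th -> 0 < de ->
  (forall a, heavy_overlap th a <= M) ->
  expect coupling (@loss_ratio R X) <= th + de + de^-1 * M.
Proof.
move=> th0 de0 heavy_le.
apply: le_trans (expect_coupling_le (fun a v => sum_resample_loss_le a v th0 de0)) _.
under eq_bigr do under eq_bigr do rewrite !mulrDr.
under eq_bigr do rewrite !big_split /=.
rewrite !big_split /= sum_pi_Qp -!addrA lerD2l lerD //.
  rewrite (sum_pi_Qp_setU (fun y => if total_weight y < de then 1 else 0)).
  apply: (@le_trans _ _ (\sum_y Qp X p y * de)); last by rewrite -mulr_suml sum_Qp mul1r.
  apply: ler_sum => y _; rewrite -mulrA ler_wpM2l //.
  by case: ltrP => [/ltW|]; rewrite ?mulr1 ?mulr0 ?(ltW de0).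
apply: (@le_trans _ _ (\sum_a pi a * (de^-1 * M))); last first.
  by rewrite -mulr_suml pi_distr.2 mul1r.
apply: ler_sum => a _.
have -> : \sum_v pi a * Qp X p v * (de^-1 * heavy_weight th a (a :|: v)) =
          pi a * (de^-1 * \sum_v Qp X p v * heavy_weight th a (a :|: v)).
  by rewrite !mulr_sumr; apply: eq_bigr => v _; ring.
by rewrite sum_Qp_heavy_weight ler_wpM2l // ler_wpM2l ?invr_ge0 ?(ltW de0).
Qed.

End Coupling.

Section SpreadOverlap.
Variables (R : realType) (X : finType) (pi : {ffun {set X} -> R}) (Rs p th : R).
Hypotheses (pi_distr : is_distr pi) (spread_pi : spread Rs pi) (p_gt0 : 0 < p).

Lemma heavy_overlap_le_spread (a : {set X}) :
  heavy_overlap pi p th a <=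
  \sum_(S : {set X} | (S \subset a) && (th * #|a|%:R < #|S|%:R)) (p * Rs)^-1 ^+ #|S|.
Proof.
pose term (S b : {set X}) := if S \subset b then pi b / p ^+ #|S| else 0.
have term_ge0 S b : 0 <= term S b.
  by rewrite /term; case: ifP => // _; rewrite divr_ge0 ?pi_distr.1 ?exprn_ge0 ?(ltW p_gt0).
apply: (@le_trans _ _ (\sum_(b : {set X})
    \sum_(S : {set X} | (S \subset a) && (th * #|a|%:R < #|S|%:R)) term S b)).
  rewrite /heavy_overlap big_mkcond; apply: ler_sum => b _.
  case: ifP => heavy_b; last by apply: sumr_ge0 => S _; apply: term_ge0.
  rewrite (bigD1 (a :&: b)) /=; last by rewrite subsetIl heavy_b.
  by rewrite /term subsetIr lerDl; apply: sumr_ge0 => S _; apply: term_ge0.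
rewrite exchange_big; apply: ler_sum => S _.
rewrite -big_mkcond /= -mulr_suml exprVn exprMn invfM mulrC ler_wpM2l //.
by rewrite invr_ge0 exprn_ge0 ?(ltW p_gt0).
Qed.

Lemma heavy_overlap_le (a : {set X}) :
  0 < Rs -> 0 < th -> 4 / (th * (p * Rs)) <= 2^-1 ->
  heavy_overlap pi p th a <= 2 * (4 / (th * (p * Rs))).
Proof.
move=> Rs_gt0 th_gt0 r_le; apply: le_trans (heavy_overlap_le_spread a) _.
rewrite big_mkcondr /= (sum_subsets_card a
  (fun j => if th * #|a|%:R < j%:R then (p * Rs)^-1 ^+ j else 0)).
apply: le_trans (binomial_tail_le #|a| th_gt0 (mulr_gt0 p_gt0 Rs_gt0) r_le).
by rewrite [leRHS]big_mkcond; apply: ler_sum => j _; case: ifP; rewrite ?mulr0 ?exprVn.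
Qed.

End SpreadOverlap.

Lemma expect_coupling_loss_cube_root (R : realType) (X : finType) (pi : {ffun {set X} -> R})
    (Rs p c : R) :
  is_distr pi -> spread Rs pi -> 0 < p -> p <= 1 -> 0 < Rs -> c ^+ 3 = p * Rs -> 2 <= c ->
  expect (coupling pi p) (@loss_ratio R X) <= 6 / c.
Proof.
move=> pi_distr spread_pi p_gt0 p_le1 Rs_gt0 c3 c_ge2.
have c_gt0 : 0 < c by apply: lt_le_trans c_ge2.
have th_gt0 : 0 < 2 / c by rewrite divr_gt0.
have r_eq : 4 / (2 / c * (p * Rs)) = 2 / c ^+ 2 by rewrite -c3; field; rewrite gt_eqF.
have r_le : 4 / (2 / c * (p * Rs)) <= 2^-1.
  by rewrite r_eq ler_pdivrMr ?exprn_gt0 //; nra.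
apply: le_trans (expect_coupling_loss_le pi_distr p_gt0 p_le1 (ltW th_gt0) th_gt0
  (fun a => heavy_overlap_le pi_distr spread_pi p_gt0 a Rs_gt0 th_gt0 r_le)) _.
rewrite r_eq (_ : 2 / c + 2 / c + (2 / c)^-1 * (2 * (2 / c ^+ 2)) = 6 / c) //.
by field; rewrite gt_eqF.
Qed.

Theorem theorem2 (R : realType) (X : finType) (Rs p : R)
  (pi : {ffun {set X} -> R}) :
  1 < Rs -> 0 < p -> p <= 1 ->
  is_distr pi -> spread Rs pi ->
  exists P : {ffun triple X -> R},
    is_distr P /\
    margA P = pi /\ margA' P = pi /\ margV P = Qp X p /\
    (forall a v : {set X}, jointAV P a v = pi a * Qp X p v) /\
    expect P (@loss_ratio R X) <= 7 / ((p * Rs) `^ (3%:R^-1)) /\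
    spread Rs (margA' P).
Proof.
move=> Rs_gt1 p_gt0 p_le1 pi_distr spread_pi.
have Rs_gt0 : 0 < Rs by apply: lt_trans Rs_gt1.
have margA'_eq := margA'_coupling pi_distr p_gt0.
exists (coupling pi p); split; first exact: is_distr_coupling.
split; first exact: margA_coupling.
split; first exact: margA'_eq.
split; first exact: margV_coupling.
split; first exact: jointAV_coupling.
split; last by rewrite margA'_eq.
set c := (p * Rs) `^ 3%:R^-1.
have c_gt0 : 0 < c by rewrite powR_gt0 // mulr_gt0.
have c3 : c ^+ 3 = p * Rs.
  by rewrite /c -powR_mulrn ?mulr_ge0 ?ltW // -powRrM mulVf ?powRr1 ?mulr_ge0 ?ltW.
have [c_le7|c_gt7] := lerP c 7.
  apply: le_trans (expect_coupling_loss_le1 pi_distr p_gt0 p_le1) _.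
  by rewrite ler_pdivlMr // mul1r.
apply: le_trans (expect_coupling_loss_cube_root pi_distr spread_pi p_gt0 p_le1 Rs_gt0 c3 _) _.
  by apply: ltW; apply: lt_trans c_gt7; lra.
by rewrite ler_pM2r ?invr_gt0 // ler_nat.
Qed.
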